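(* Let $M$ be a power-associative magma (finite or infinite). Then the undirected power graph $P(M)$ is perfect: every finite induced subgraph of $P(M)$ has clique number equal to its chromatic number. In particular, the power graph of any group contains no induced cycle $C_n$ with $n$ odd, $n\ge 5$, and no induced complement of such a cycle.
   Context: A power-associative magma is a set with a binary operation such that the associative law holds for products of powers of a single element, so that positive powers $x^n$ are unambiguously defined. The (undirected) power graph $P(M)$ has vertex set $M$, with distinct $u,v$ adjacent if and only if $v=u^i$ or $u=v^j$ for some positive integers $i,j$. An infinite graph is called perfect if every finite induced subgraph has clique number equal to chromatic number. *)

From Stdlib Require Import List Arith Lia.
Import ListNotations.
Set Implicit Arguments.

(* Positive powers in a magma (M, op):  mpow op x n = x^(n+1),
   with x^1 = x and x^(k+1) = x^k * x. *)
Fixpoint mpow (M : Type) (op : M -> M -> M) (x : M) (n : nat) : M :=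
  match n with
  | 0 => x
  | S k => op (mpow op x k) x
  end.

(* x^i for i >= 1 (the value at i = 0 is irrelevant, only i >= 1 is used). *)
Definition ppow (M : Type) (op : M -> M -> M) (x : M) (i : nat) : M :=
  mpow op x (i - 1).

(* Power-associativity: x^m * x^n = x^(m+n) for all m, n >= 1; equivalently
   every bracketing of a product of copies of x gives the same element. *)
Definition power_associative (M : Type) (op : M -> M -> M) : Prop :=
  forall (x : M) (m n : nat), 1 <= m -> 1 <= n ->
    op (ppow op x m) (ppow op x n) = ppow op x (m + n).

Definition power_adj (M : Type) (op : M -> M -> M) (u v : M) : Prop :=
  u <> v /\
  ((exists i, 1 <= i /\ v = ppow op u i) \/ (exists j, 1 <= j /\ u = ppow op v j)).

(* Graph-theoretic notions for an induced subgraph on a finite vertex set S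
   (given as a duplicate-free list) of a graph with adjacency relation adj. *)
Definition is_clique (M : Type) (adj : M -> M -> Prop) (S C : list M) : Prop :=
  NoDup C /\ incl C S /\
  (forall x y, In x C -> In y C -> x <> y -> adj x y).

Definition proper_coloring (M : Type) (adj : M -> M -> Prop) (S : list M)
    (k : nat) (c : M -> nat) : Prop :=
  (forall x, In x S -> c x < k) /\
  (forall x y, In x S -> In y S -> adj x y -> c x <> c y).

Definition is_clique_number (M : Type) (adj : M -> M -> Prop) (S : list M)
    (w : nat) : Prop :=
  (exists C, is_clique adj S C /\ length C = w) /\
  (forall C, is_clique adj S C -> length C <= w).

Definition is_chromatic_number (M : Type) (adj : M -> M -> Prop) (S : list M)
    (k : nat) : Prop :=
  (exists c, proper_coloring adj S k c) /\
  (forall k' c, proper_coloring adj S k' c -> k <= k').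

Definition perfect_graph (M : Type) (adj : M -> M -> Prop) : Prop :=
  forall S : list M, NoDup S ->
    exists w, is_clique_number adj S w /\ is_chromatic_number adj S w.

From Stdlib Require Import List Arith.
From Stdlib Require Import Lia Sorted Classical IndefiniteDescription.
Import ListNotations.

(* The relation "u is a power of v" is a preorder (reflexive by x = x^1,
   transitive by (x^j)^i = x^(ij), which is where power-associativity enters),
   and two distinct vertices are adjacent exactly when they are comparable in
   it.  On a finite vertex set S this preorder is refined to a strict partial
   order by breaking ties between mutually-power elements by their position in
   S, so every finite induced subgraph of P(M) is the comparability graph of a
   strict partial order.  Comparability graphs are perfect (Mirsky): colouring
   each vertex by the length of the longest chain strictly below it is proper
   and uses exactly as many colours as the longest chain, which is a clique;
   and no clique can be larger than the number of colours of a proper colouring. *)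

(* A clique needs pairwise distinct colours, so it is no larger than the
   number of colours of any proper colouring. *)
Lemma clique_le_colors (M : Type) (adj : M -> M -> Prop) (S C : list M)
    (k : nat) (c : M -> nat) :
  proper_coloring adj S k c -> is_clique adj S C -> length C <= k.
Proof.
  intros [Hrange Hproper] [HnodupC [HinclC HcliqueC]].
  assert (Hdistinct : NoDup (map c C)).
  { apply NoDup_map_NoDup_ForallPairs; [|exact HnodupC].
    intros x y Hx Hy Hxy. destruct (classic (x = y)) as [|Hne]; [assumption|].
    exfalso. apply (Hproper x y); auto. }
  assert (Hcolors : incl (map c C) (seq 0 k)).
  { intros n Hn. apply in_map_iff in Hn as [x [<- Hx]]. apply in_seq.
    specialize (Hrange x (HinclC x Hx)). lia. }
  pose proof (NoDup_incl_length Hdistinct Hcolors) as Hlen.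
  now rewrite length_map, length_seq in Hlen.
Qed.

Lemma bounded_max (P : nat -> Prop) (bound : nat) :
  (exists n, P n) -> (forall n, P n -> n <= bound) ->
  exists m, P m /\ forall n, P n -> n <= m.
Proof.
  revert P; induction bound as [|bound IH]; intros P [n0 Hn0] Hbound.
  - exists 0. assert (n0 = 0) as -> by (specialize (Hbound n0 Hn0); lia).
    split; [assumption|]. exact Hbound.
  - destruct (classic (P (S bound))) as [Htop|Hnot_top].
    + exists (S bound). split; assumption.
    + apply IH; [now exists n0|]. intros n Hn.
      assert (n <> S bound) by (intros ->; contradiction).
      specialize (Hbound n Hn). lia.
Qed.

Lemma sorted_comparable (A : Type) (r : A -> A -> Prop) (l : list A) :
  StronglySorted r l ->
  forall y z, In y l -> In z l -> y <> z -> r y z \/ r z y.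
Proof.
  induction 1 as [|a l _ IH Hhead]; simpl; intros y z Hy Hz Hne; [contradiction|].
  rewrite Forall_forall in Hhead.
  destruct Hy as [<-|Hy]; destruct Hz as [<-|Hz]; try congruence.
  - left. apply Hhead, Hz.
  - right. apply Hhead, Hy.
  - apply IH; assumption.
Qed.

Section ComparabilityGraph.
Variable M : Type.
Variable adj : M -> M -> Prop.
Variable lt : M -> M -> Prop.
Variable S : list M.
Hypothesis lt_trans : forall a b c, lt a b -> lt b c -> lt a c.
Hypothesis lt_irrefl : forall a, ~ lt a a.
Hypothesis adj_comparable :
  forall u v, In u S -> In v S -> (adj u v <-> lt u v \/ lt v u).

Definition chain (l : list M) : Prop :=
  StronglySorted (fun a b => lt b a) l /\ incl l S.

Lemma chain_NoDup (l : list M) : chain l -> NoDup l.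
Proof.
  intros [Hsorted _]. induction Hsorted as [|a l _ IH Hhead]; constructor; auto.
  intro Hin. rewrite Forall_forall in Hhead. exact (lt_irrefl a (Hhead a Hin)).
Qed.

Lemma chain_is_clique (l : list M) : chain l -> is_clique adj S l.
Proof.
  intros Hchain. pose proof Hchain as [Hsorted Hincl].
  split; [now apply chain_NoDup|split; [assumption|]].
  intros x y Hx Hy Hne. apply adj_comparable; auto.
  destruct (sorted_comparable M (fun a b => lt b a) l Hsorted x y Hx Hy Hne); auto.
Qed.

Definition longest (Q : list M -> Prop) (m : nat) : Prop :=
  (exists l, Q l /\ length l = m) /\ (forall l, Q l -> length l <= m).

(* Chains are no longer than S, so any nonempty family of chains has a
   longest member. *)
Lemma longest_exists (Q : list M -> Prop) :
  (exists l, Q l) -> (forall l, Q l -> chain l) -> exists m, longest Q m.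
Proof.
  intros [l0 Hl0] Hchains.
  destruct (bounded_max (fun n => exists l, Q l /\ length l = n) (length S))
    as [m [Hm Hmax]].
  - now exists (length l0), l0.
  - intros n [l [Hl <-]]. apply NoDup_incl_length.
    + now apply chain_NoDup, Hchains.
    + apply Hchains, Hl.
  - exists m. split; [assumption|]. intros l Hl. apply Hmax. now exists l.
Qed.

Definition chain_below (x : M) (l : list M) : Prop :=
  chain l /\ Forall (fun y => lt y x) l.

Lemma height_exists :
  exists height : M -> nat, forall x, longest (chain_below x) (height x).
Proof.
  apply (functional_choice (fun x m => longest (chain_below x) m)).
  intros x. apply longest_exists.
  - exists []. split; [split; [constructor|intros a []]|constructor].
  - intros l [Hl _]. exact Hl.
Qed.

Section Height.
Variable height : M -> nat.
Hypothesis height_spec : forall x, longest (chain_below x) (height x).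

Lemma chain_below_cons (x : M) (l : list M) :
  In x S -> chain_below x l -> chain (x :: l).
Proof.
  intros Hx [[Hsorted Hincl] Hbelow]. split.
  - now constructor.
  - intros a [<-|Ha]; auto.
Qed.

Lemma height_mono (x y : M) : In x S -> lt x y -> height x < height y.
Proof.
  intros Hx Hxy. destruct (height_spec x) as [[l [Hl Hlen]] _].
  assert (Hext : chain_below y (x :: l)).
  { split; [now apply chain_below_cons|].
    constructor; [assumption|].
    destruct Hl as [_ Hbelow]. rewrite Forall_forall in *.
    intros a Ha. exact (lt_trans _ _ _ (Hbelow a Ha) Hxy). }
  destruct (height_spec y) as [_ Hmax].
  specialize (Hmax _ Hext). simpl in Hmax. lia.
Qed.

Lemma height_coloring (w : nat) :
  longest chain w -> proper_coloring adj S w height.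
Proof.
  intros [_ Hmax]. split.
  - intros x Hx. destruct (height_spec x) as [[l [Hl Hlen]] _].
    specialize (Hmax _ (chain_below_cons x l Hx Hl)). simpl in Hmax. lia.
  - intros x y Hx Hy Hadj Heq. apply adj_comparable in Hadj; auto.
    destruct Hadj as [Hxy|Hyx].
    + pose proof (height_mono x y Hx Hxy). lia.
    + pose proof (height_mono y x Hy Hyx). lia.
Qed.
End Height.

(* Mirsky: a comparability graph has clique number equal to chromatic number,
   both being the length of the longest chain. *)
Theorem comparability_graph_perfect :
  exists w, is_clique_number adj S w /\ is_chromatic_number adj S w.
Proof.
  destruct (longest_exists chain) as [w Hw].
  { exists []. split; [constructor|intros a []]. }
  { tauto. }
  destruct height_exists as [height Hheight].
  pose proof (height_coloring height Hheight w Hw) as Hcoloring.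
  destruct Hw as [[C [HC HlenC]] _].
  pose proof (chain_is_clique C HC) as Hclique.
  exists w. split; split.
  - now exists C.
  - intros C' HC'. exact (clique_le_colors M adj S C' w height Hcoloring HC').
  - now exists height.
  - intros k c Hc. rewrite <- HlenC. exact (clique_le_colors M adj S C k c Hc Hclique).
Qed.
End ComparabilityGraph.

Section TieBreaking.
Variable M : Type.
Variable le : M -> M -> Prop.
Hypothesis le_refl : forall a, le a a.
Hypothesis le_trans : forall a b c, le a b -> le b c -> le a c.
Variable S : list M.
Hypothesis S_nodup : NoDup S.

Fixpoint before (l : list M) (u v : M) : Prop :=
  match l with
  | [] => False
  | a :: l' => (u = a /\ In v l') \/ before l' u v
  end.

Lemma before_in_r (l : list M) (u v : M) : before l u v -> In v l.
Proof. induction l; simpl; intuition. Qed.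

Lemma before_trans (l : list M) (u v w : M) :
  NoDup l -> before l u v -> before l v w -> before l u w.
Proof.
  induction l as [|a l IH]; simpl; [tauto|]. intros Hnd.
  inversion Hnd as [|? ? Ha_notin Hnd']; subst.
  intros [[-> Hv]|Buv] [[-> Hw]|Bvw].
  - contradiction.
  - left. split; [reflexivity|]. eapply before_in_r; eauto.
  - apply before_in_r in Buv. contradiction.
  - right. eauto.
Qed.

Lemma before_irrefl (l : list M) (u : M) : NoDup l -> ~ before l u u.
Proof.
  induction l as [|a l IH]; simpl; [tauto|]. intros Hnd.
  inversion Hnd as [|? ? Ha_notin Hnd']; subst.
  intros [[-> Hin]|B]; [contradiction|]. exact (IH Hnd' B).
Qed.

Lemma before_total (l : list M) (u v : M) :
  In u l -> In v l -> u <> v -> before l u v \/ before l v u.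
Proof.
  induction l as [|a l IH]; simpl; [tauto|].
  intros [->|Hu] [->|Hv] Hne; try congruence; auto.
  destruct (IH Hu Hv Hne); auto.
Qed.

Definition refined_lt (u v : M) : Prop :=
  le u v /\ (~ le v u \/ before S u v).

Lemma refined_lt_trans (a b c : M) :
  refined_lt a b -> refined_lt b c -> refined_lt a c.
Proof.
  intros [Hab Oab] [Hbc Obc]. split; [eauto|].
  destruct (classic (le c a)) as [Hca|]; [right|left; assumption].
  destruct Oab as [Hnba|Bab]; [exfalso; eauto|].
  destruct Obc as [Hncb|Bbc]; [exfalso; eauto|].
  eapply before_trans; eauto.
Qed.

Lemma refined_lt_irrefl (a : M) : ~ refined_lt a a.
Proof.
  intros [_ [Hnaa|Baa]]; [exact (Hnaa (le_refl a))|].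
  exact (before_irrefl S a S_nodup Baa).
Qed.

Lemma refined_lt_comparable (u v : M) : In u S -> In v S ->
  (u <> v /\ (le u v \/ le v u) <-> refined_lt u v \/ refined_lt v u).
Proof.
  intros Hu Hv.
  assert (Horient : forall a b, In a S -> In b S -> a <> b -> le a b ->
                     refined_lt a b \/ refined_lt b a).
  { intros a b Ha Hb Hne Hab. destruct (classic (le b a)) as [Hba|Hnba].
    - destruct (before_total S a b Ha Hb Hne); [left|right]; split; auto.
    - left. split; auto. }
  split.
  - intros [Hne [Huv|Hvu]]; [now apply Horient|].
    destruct (Horient v u); auto.
  - intros [Huv|Hvu].
    + split; [intros ->; now apply refined_lt_irrefl in Huv|left; apply Huv].
    + split; [intros ->; now apply refined_lt_irrefl in Hvu|right; apply Hvu].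
Qed.
End TieBreaking.

Section PowerPreorder.
Variable M : Type.
Variable op : M -> M -> M.
Hypothesis power_assoc : power_associative op.

Definition is_power_of (u v : M) : Prop := exists i, 1 <= i /\ u = ppow op v i.

Lemma ppow_ppow (x : M) (i j : nat) : 1 <= i -> 1 <= j ->
  ppow op (ppow op x j) i = ppow op x (i * j).
Proof.
  intros Hi Hj. unfold ppow at 1.
  assert (Hmpow : forall n, mpow op (ppow op x j) n = ppow op x (S n * j)).
  { induction n as [|n IH].
    - simpl. now rewrite Nat.add_0_r.
    - simpl mpow. rewrite IH, power_assoc by nia. f_equal. nia. }
  rewrite Hmpow. f_equal. nia.
Qed.

Lemma is_power_of_refl (a : M) : is_power_of a a.
Proof. now exists 1. Qed.

Lemma is_power_of_trans (a b c : M) :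
  is_power_of a b -> is_power_of b c -> is_power_of a c.
Proof.
  intros [i [Hi ->]] [j [Hj ->]]. exists (i * j). split; [nia|].
  now apply ppow_ppow.
Qed.

Lemma power_adj_iff (u v : M) :
  power_adj op u v <-> u <> v /\ (is_power_of u v \/ is_power_of v u).
Proof. unfold power_adj, is_power_of. firstorder. Qed.
End PowerPreorder.

Theorem mainTheorem3 (M : Type) (op : M -> M -> M) :
  power_associative op -> perfect_graph (power_adj op).
Proof.
  intros power_assoc S S_nodup.
  (* On S, the power graph is the comparability graph of the refined order. *)
  apply (comparability_graph_perfect M (power_adj op)
           (refined_lt M (is_power_of M op) S) S).
  - apply refined_lt_trans; [|exact S_nodup].
    exact (is_power_of_trans M op power_assoc).
  - apply refined_lt_irrefl; [apply is_power_of_refl|exact S_nodup].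
  - intros u v Hu Hv. rewrite power_adj_iff.
    apply refined_lt_comparable; auto using is_power_of_refl.
Qed.
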